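(* Let $a\geq 2$ be an integer and $m\geq 1$. The number of pyramids of size $m$ made of pieces of length $a$ (with bottom piece covering the interval $]0,a[$) equals $\binom{am-1}{m-1}$.
   Context: Fix an integer $a\geq 2$. A piece is an open interval $]s,s+a[$ of the real line with $s\in\mathbb Z$; two pieces are concurrent iff their intervals intersect. A heap (in the sense of Viennot) is a finite configuration obtained by successively dropping pieces vertically towards the horizontal axis: each dropped piece comes to rest either on the axis or on top of the highest previously placed piece whose interval intersects its own; two dropping orders give the same heap iff they produce the same configuration of placed pieces. Equivalently, a heap is the finite poset of placed pieces ordered by the transitive closure of ''$\beta$ lies above $\alpha$ and their intervals intersect''. A heap is a pyramid if it has a unique bottom (minimal) piece, i.e. exactly one piece rests on the axis. The size $|p|$ of a pyramid $p$ is its number of pieces. When not otherwise specified, a pyramid is assumed to have its bottom piece covering the interval $]0,a[$. *)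

From HB Require Import structures.
From mathcomp Require Import all_boot all_order all_algebra.
From mathcomp Require Import finmap.
Set Implicit Arguments. Unset Strict Implicit. Unset Printing Implicit Defensive.
Import Order.TTheory GRing.Theory Num.Theory.
Local Open Scope fset_scope.

(* A piece is the open interval ]s, s+a[ with s : int; it is identified by s.
   Two pieces ]s,s+a[ and ]t,t+a[ intersect iff |s - t| < a. *)
Definition concurrent (a : nat) (s t : int) : bool := (`|s - t| < a%:Z)%R.

(* A placed piece is a pair (s, level); level 0 means resting on the axis. *)
Definition drop_level (a : nat) (c : seq (int * nat)) (s : int) : nat :=
  foldr (fun p acc => if concurrent a p.1 s then maxn p.2.+1 acc else acc) 0%N c.

Definition drop_piece (a : nat) (c : seq (int * nat)) (s : int) : seq (int * nat) :=
  (s, drop_level a c s) :: c.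

Definition build (a : nat) (l : seq int) : seq (int * nat) :=
  foldl (drop_piece a) [::] l.

Definition heap_of (a : nat) (l : seq int) : {fset (int * nat)} :=
  [fset x | x in build a l].

Definition is_heap (a : nat) (H : {fset (int * nat)}) : Prop :=
  exists l : seq int, heap_of a l = H.

Definition is_pyramid (a : nat) (H : {fset (int * nat)}) : Prop :=
  is_heap a H /\ [fset p in H | p.2 == 0%N] = [fset (0%Z, 0%N)].

(* A heap is the commutation class of the words that drop its pieces: two words
   give the same heap iff they differ by swaps of adjacent non-concurrent letters,
   a piece lying on the axis can be commuted to the front of a word, and a top
   piece to its end.  Reversing words is therefore an involution on heaps which
   exchanges the pieces on the axis with the top pieces, so pyramids of size m
   with bottom ]0,a[ correspond to heaps of size m whose only top piece is at 0.
   Let T(lo,hi,m) be the set of heaps of size m all of whose top pieces lie in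
   [lo,hi).  Removing the top piece at hi-1 when there is one gives
     |T(lo,hi,m+1)| = |T(lo,hi-1,m+1)| + |T(min(lo,hi-a), hi-1+a, m)|,
   whose solution is |T(lo,lo+n,m)| = C(am+n-a, m) for n >= a-1; one more step
   from the window [0,1) yields C(am-1, m-1) pyramids of size m. *)
Set Warnings "-notation-overridden -ambiguous-paths -notation-incompatible-prefix".
From HB Require Import structures.
From mathcomp Require Import all_boot all_order all_algebra.
From mathcomp Require Import finmap zify.
From Stdlib Require Import Relations ClassicalEpsilon.

Set Implicit Arguments. Unset Strict Implicit. Unset Printing Implicit Defensive.
Import Order.TTheory GRing.Theory Num.Theory.
Local Open Scope fset_scope.

Section HeapsOfPieces.

Variable a : nat.
Hypothesis a_gt0 : (0 < a)%N.

Lemma concurrentC s t : concurrent a s t = concurrent a t s.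
Proof. by rewrite /concurrent distrC. Qed.

Lemma concurrentxx s : concurrent a s s.
Proof. by rewrite /concurrent subrr normr0 ltz_nat. Qed.

Lemma drop_level_gt c s q :
  q \in c -> concurrent a q.1 s -> (q.2 < drop_level a c s)%N.
Proof.
elim: c => //= p c IH; rewrite inE => /orP [/eqP->|qc] cq.
  by rewrite cq leq_max ltnSn.
case: ifP => _; last exact: IH.
by rewrite leq_max IH ?orbT.
Qed.

Lemma drop_levelP c s : drop_level a c s = 0%N \/
  exists2 q, q \in c & concurrent a q.1 s /\ drop_level a c s = q.2.+1.
Proof.
elim: c => [|p c IH] /=; first by left.
case: ifP => cp; last first.
  case: IH => [->|[q qc [cq ->]]]; first by left.
  by right; exists q; rewrite ?inE ?qc ?orbT.
right; case: (leqP (drop_level a c s) p.2.+1) => hle.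
  by exists p; rewrite ?inE ?eqxx //; split=> //; apply/maxn_idPl.
case: IH => [E|[q qc [cq E]]]; first by rewrite E in hle.
by exists q; rewrite ?inE ?qc ?orbT.
Qed.

Lemma eq_drop_level c c' s : c =i c' -> drop_level a c s = drop_level a c' s.
Proof.
suff le_dl c1 c2 : c1 =i c2 -> (drop_level a c1 s <= drop_level a c2 s)%N.
  by move=> E; apply/eqP; rewrite eqn_leq !le_dl.
move=> E; case: (drop_levelP c1 s) => [->|[q qc [cq ->]]] //.
by apply: drop_level_gt => //; rewrite -E.
Qed.

Lemma drop_level_notin c s : (s, drop_level a c s) \notin c.
Proof.
by apply/negP => /drop_level_gt /(_ (concurrentxx s)); rewrite ltnn.
Qed.

Lemma build_rcons w s : build a (rcons w s) = drop_piece a (build a w) s.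
Proof. by rewrite /build foldl_rcons. Qed.

Lemma build_cat u v : build a (u ++ v) = foldl (drop_piece a) (build a u) v.
Proof. by rewrite /build foldl_cat. Qed.

Lemma eq_foldl_drop c c' v : c =i c' ->
  foldl (drop_piece a) c v =i foldl (drop_piece a) c' v.
Proof.
elim: v c c' => //= s v IH c c' E; apply: IH => x.
by rewrite !inE (eq_drop_level _ E) E.
Qed.

Lemma mem_foldl_drop c v p : p \in c -> p \in foldl (drop_piece a) c v.
Proof. by elim: v c => //= s v IH c pc; apply: IH; rewrite inE pc orbT. Qed.

Lemma drop_level_foldl c y t : all (fun r => ~~ concurrent a r t) y ->
  drop_level a (foldl (drop_piece a) c y) t = drop_level a c t.
Proof.
by elim: y c => //= r y IH c /andP [nrt /IH ->] /=; rewrite (negbTE nrt).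
Qed.

Lemma build_uniq w : uniq (build a w).
Proof.
elim/last_ind: w => [|w s IH] //.
by rewrite build_rcons /= IH drop_level_notin.
Qed.

Lemma size_build w : size (build a w) = size w.
Proof.
by elim/last_ind: w => [|w s IH] //; rewrite build_rcons /= IH size_rcons.
Qed.

Lemma mem_build_rcons w s : (s, drop_level a (build a w) s) \in build a (rcons w s).
Proof. by rewrite build_rcons inE eqxx. Qed.

Lemma mem_build_mid x t y : (t, drop_level a (build a x) t) \in build a (x ++ t :: y).
Proof. by rewrite -cat_rcons build_cat mem_foldl_drop ?mem_build_rcons. Qed.

Lemma build_split w p : p \in build a w ->
  exists x y, w = x ++ p.1 :: y /\ p.2 = drop_level a (build a x) p.1.
Proof.
elim/last_ind: w => [|w s IH] //.
rewrite build_rcons inE => /orP [/eqP->|pw]; first by exists w, [::]; rewrite cats1.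
by case: (IH pw) => x [y [-> E]]; exists x, (rcons y s); rewrite rcons_cat.
Qed.

Inductive commute_step : seq int -> seq int -> Prop :=
  CommuteStep u s t v : ~~ concurrent a s t ->
    commute_step (u ++ s :: t :: v) (u ++ t :: s :: v).

Definition commute_eq := clos_refl_trans _ commute_step.

Lemma commute_eq_sym u v : commute_eq u v -> commute_eq v u.
Proof.
elim=> [_ _ [u0 s t v0 nst]| x | x y z _ Exy _ Eyz]; last exact: rt_trans Eyz Exy.
  by apply: rt_step; constructor; rewrite concurrentC.
exact: rt_refl.
Qed.

Lemma commute_eq_cat p q u v :
  commute_eq u v -> commute_eq (p ++ u ++ q) (p ++ v ++ q).
Proof.
elim=> [_ _ [u0 s t v0 nst]| x | x y z _ Exy _ Eyz]; last exact: rt_trans Exy Eyz.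
  by apply: rt_step; rewrite -!catA /= !catA; constructor.
exact: rt_refl.
Qed.

Lemma commute_eq_rev u v : commute_eq u v -> commute_eq (rev u) (rev v).
Proof.
elim=> [_ _ [u0 s t v0 nst]| x | x y z _ Exy _ Eyz]; last exact: rt_trans Exy Eyz.
  apply: rt_step; rewrite !rev_cat !rev_cons -!cats1 -!catA /=.
  by constructor; rewrite concurrentC.
exact: rt_refl.
Qed.

Lemma build_commute u v : commute_eq u v -> build a u =i build a v.
Proof.
elim=> [_ _ [u0 s t v0 nst]| // | x y z _ Exy _ Eyz p]; last by rewrite Exy Eyz.
rewrite !build_cat /=; apply: eq_foldl_drop => p.
have nts : concurrent a t s = false by rewrite concurrentC; apply/negbTE.
by rewrite /drop_piece /= (negbTE nst) nts !inE orbCA.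
Qed.

Lemma commute_to_end x t y : all (fun r => ~~ concurrent a r t) y ->
  commute_eq (x ++ t :: y) (rcons (x ++ y) t).
Proof.
elim: y x => [|r y IH] x /=; first by rewrite cats0 cats1; constructor 2.
case/andP => nrt ny; apply: rt_trans (_ : commute_eq (rcons x r ++ t :: y) _).
  by rewrite -cats1 -catA; apply: rt_step; constructor; rewrite concurrentC.
by have := IH (rcons x r) ny; rewrite !cat_rcons.
Qed.

Lemma commute_to_front x s : all (fun r => ~~ concurrent a r s) x ->
  commute_eq (rcons x s) (s :: x).
Proof.
elim: x => [|r x IH] /=; first by constructor 2.
case/andP => nrs nx; apply: rt_trans (_ : commute_eq (r :: s :: x) _).
  by have := commute_eq_cat [:: r] [::] (IH nx); rewrite /= !cats0.
exact: rt_step (@CommuteStep [::] r s x nrs).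
Qed.

Lemma build_top w t d : (t, d) \in build a w ->
  (forall r, r \in build a w -> concurrent a r.1 t -> (r.2 <= d)%N) ->
  exists w', commute_eq w (rcons w' t) /\ d = drop_level a (build a w') t.
Proof.
case/build_split=> x [y [-> /= ->]] d_max.
have y_free : all (fun r => ~~ concurrent a r t) y.
  (* a later letter concurrent with [t] would land strictly above [(t, d)] *)
  apply/allP=> r ry; case/splitPr: ry d_max => y1 y2 d_max; apply/negP=> crt.
  have := mem_build_mid (x ++ t :: y1) r y2; rewrite -catA => /d_max /=.
  rewrite crt leqNgt => /(_ isT)/negP; apply.
  by apply: drop_level_gt (mem_build_mid x t y1) _; rewrite concurrentC.
exists (x ++ y); split; first exact: commute_to_end.
by rewrite build_cat drop_level_foldl.
Qed.

Lemma commute_of_build u v : build a u =i build a v -> commute_eq u v.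
Proof.
elim/last_ind: u v => [|u t IH] v E.
  case/lastP: v E => [|v s E]; first by constructor 2.
  by have := E (s, drop_level a (build a v) s); rewrite mem_build_rcons.
set d := drop_level a (build a u) t.
have [v' [Ev Ed]] : exists v', commute_eq v (rcons v' t) /\ d = drop_level a (build a v') t.
  apply: build_top => [|r]; rewrite -E ?mem_build_rcons // build_rcons inE.
  by case/orP=> [/eqP -> //| /drop_level_gt lt /lt /ltnW].
have Eu : build a u =i build a v'.
  move=> p; have := E p; rewrite (build_commute Ev) !build_rcons !inE -Ed -/d.
  case: eqP => [-> _|//]; rewrite {1}/d Ed.
  by rewrite !(negbTE (drop_level_notin _ _)).
apply: rt_trans (commute_eq_sym Ev).
by have := commute_eq_cat [::] [:: t] (IH v' Eu); rewrite /= !cats1.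
Qed.

Lemma mem_build_cons w s : (s, 0%N) \in build a (s :: w).
Proof. by rewrite /build /= mem_foldl_drop ?inE. Qed.

Lemma build_level0 w s : (s, 0%N) \in build a w -> exists w', commute_eq w (s :: w').
Proof.
elim/last_ind: w => [|w t IH] //; rewrite build_rcons inE.
case/orP=> [/eqP [<- dl0]|/IH [w' Ew]]; last first.
  by exists (rcons w' t); have := commute_eq_cat [::] [:: t] Ew; rewrite /= !cats1.
exists w; apply: commute_to_front; apply/allP=> r rw; apply/negP=> crs.
case/splitPr: rw dl0 => x y dl0.
by have := drop_level_gt (mem_build_mid x r y) crs; rewrite -dl0.
Qed.

Lemma mem_heap_of w p : (p \in heap_of a w) = (p \in build a w).
Proof. by rewrite inE. Qed.

Lemma heap_of_eq u v : heap_of a u = heap_of a v <-> commute_eq u v.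
Proof.
split=> [E|/build_commute E].
  by apply: commute_of_build => p; rewrite -!mem_heap_of E.
by apply/fsetP=> p; rewrite !mem_heap_of E.
Qed.

Lemma card_heap_of w : #|` heap_of a w| = size w.
Proof.
by rewrite card_in_imfset //= undup_id ?build_uniq ?size_build.
Qed.

Definition add_piece (F : {fset int * nat}) s := (s, drop_level a F s) |` F.

Definition is_top (H : {fset int * nat}) q :=
  q \in H /\ forall r, r \in H -> concurrent a r.1 q.1 -> (r.2 <= q.2)%N.

Lemma heap_of_rcons w s : heap_of a (rcons w s) = add_piece (heap_of a w) s.
Proof.
apply/fsetP=> p; rewrite in_fset1U !mem_heap_of build_rcons inE.
by rewrite (@eq_drop_level (heap_of a w : seq _) (build a w)) // => q; rewrite mem_heap_of.
Qed.

Lemma card_add_piece F s : #|` add_piece F s| = #|` F|.+1.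
Proof. by rewrite cardfsU1 drop_level_notin. Qed.

Lemma add_piece_inj F F' s : add_piece F s = add_piece F' s -> F = F'.
Proof.
move=> E; suff E_dl : drop_level a F s = drop_level a F' s.
  rewrite -(fsetU1K (drop_level_notin F s)) -(fsetU1K (drop_level_notin F' s)).
  by rewrite -/(add_piece F s) E /add_piece E_dl.
have : (s, drop_level a F s) \in add_piece F' s by rewrite -E fset1U1.
have : (s, drop_level a F' s) \in add_piece F s by rewrite E fset1U1.
rewrite !in_fset1U => /orP [/eqP [-> //]|/drop_level_gt lt'].
case/orP=> [/eqP [-> //]|/drop_level_gt lt].
by have := ltn_trans (lt _ (concurrentxx s)) (lt' _ (concurrentxx s)); rewrite ltnn.
Qed.

Lemma is_heap_add_piece F s : is_heap a F -> is_heap a (add_piece F s).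
Proof. by case=> w <-; exists (rcons w s); rewrite heap_of_rcons. Qed.

Lemma is_top_add_piece F s : is_top (add_piece F s) (s, drop_level a F s).
Proof.
split=> [|r]; first exact: fset1U1.
by rewrite in_fset1U => /orP [/eqP -> //| /drop_level_gt lt /lt /ltnW].
Qed.

Lemma is_top_add_pieceE (F : {fset int * nat}) s q : q != (s, drop_level a F s) ->
  is_top (add_piece F s) q <-> is_top F q /\ ~~ concurrent a q.1 s.
Proof.
move=> /negbTE q_old; split=> [[]|[[qF q_max] nqs]].
  rewrite in_fset1U q_old /= => qF q_max.
  have nqs : ~~ concurrent a q.1 s.
    apply/negP=> cqs; have := q_max _ (fset1U1 _ _); rewrite /= concurrentC.
    by move=> /(_ cqs); rewrite leqNgt drop_level_gt.
  by split=> //; split=> // r rF; apply: q_max; rewrite in_fset1U rF orbT.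
split=> [|r]; first by rewrite in_fset1U qF orbT.
rewrite in_fset1U => /orP [/eqP -> /=|]; last exact: q_max.
by rewrite concurrentC (negbTE nqs).
Qed.

Lemma is_top_split H q : is_heap a H -> is_top H q ->
  exists2 F, is_heap a F & H = add_piece F q.1.
Proof.
case: q => t d [w <-] [qH q_max]; rewrite mem_heap_of in qH.
have [|w' [Ew _]] := build_top qH; first by move=> r; rewrite -mem_heap_of; apply: q_max.
by exists (heap_of a w'); [exists w' | rewrite -heap_of_rcons; apply/heap_of_eq].
Qed.

Lemma exists_top H : is_heap a H -> H != fset0 -> exists q, is_top H q.
Proof.
case=> w <-; case/lastP: w => [|w s _].
  by rewrite -cardfs_gt0 card_heap_of.
by rewrite heap_of_rcons; exists (s, drop_level a (heap_of a w) s); apply: is_top_add_piece.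
Qed.

(* For [H] not a heap, [heap_word H] is an arbitrary word. *)
Definition heap_word (H : {fset int * nat}) : seq int :=
  epsilon (inhabits [::]) (fun w => heap_of a w = H).

Definition heap_rev (H : {fset int * nat}) := heap_of a (rev (heap_word H)).

Lemma heap_wordK H : is_heap a H -> heap_of a (heap_word H) = H.
Proof. exact: epsilon_spec. Qed.

Lemma is_heap_rev H : is_heap a (heap_rev H).
Proof. by exists (rev (heap_word H)). Qed.

Lemma card_heap_rev H : is_heap a H -> #|` heap_rev H| = #|` H|.
Proof. by move=> /heap_wordK {2}<-; rewrite !card_heap_of size_rev. Qed.

Lemma heap_revK H : is_heap a H -> heap_rev (heap_rev H) = H.
Proof.
move=> /heap_wordK {2}<-; rewrite /heap_rev.
have /heap_of_eq/commute_eq_rev := heap_wordK (is_heap_rev H).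
by rewrite revK => /heap_of_eq.
Qed.

Lemma level0_heap_rev H s : is_heap a H ->
  (s, 0%N) \in H <-> exists d, is_top (heap_rev H) (s, d).
Proof.
move=> /heap_wordK {1}<-; rewrite /heap_rev.
split=> [|[d /(is_top_split (is_heap_rev H)) [_ [v <-]]]].
  rewrite mem_heap_of => /build_level0 [w' /commute_eq_rev].
  rewrite rev_cons => /heap_of_eq ->; rewrite heap_of_rcons.
  by eexists; apply: is_top_add_piece.
rewrite /heap_rev -heap_of_rcons => /heap_of_eq /commute_eq_rev.
by rewrite revK rev_rcons mem_heap_of => /build_commute ->; apply: mem_build_cons.
Qed.

Lemma is_pyramidP H : is_pyramid a H <->
  [/\ is_heap a H, (0%Z, 0%N) \in H & forall s, (s, 0%N) \in H -> s = 0%Z].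
Proof.
have mem0 p : (p \in [fset q in H | q.2 == 0%N]) = (p \in H) && (p.2 == 0%N).
  by rewrite !inE.
split=> [[hH /fsetP E]|[hH H0 H0_uniq]].
  split=> // [|s sH]; first by have := E (0%Z, 0%N); rewrite mem0 !inE eqxx andbT.
  by have := E (s, 0%N); rewrite mem0 sH !inE /= => /esym /eqP [].
split=> //; apply/fsetP=> -[s l]; rewrite mem0 !inE /= xpair_eqE.
by apply/andP/andP=> [[/[swap] /eqP -> /H0_uniq -> //]|[/eqP -> /eqP ->]].
Qed.

Lemma exists_level0 H : is_heap a H -> H != fset0 -> exists s, (s, 0%N) \in H.
Proof.
case=> -[|s w] <-; first by rewrite -cardfs_gt0 card_heap_of.
by exists s; rewrite mem_heap_of mem_build_cons.
Qed.

Lemma is_pyramid_heap_rev G : is_heap a G ->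
  is_pyramid a (heap_rev G) <-> G != fset0 /\ forall q, is_top G q -> q.1 = 0%Z.
Proof.
move=> hG; have level0 s : (s, 0%N) \in heap_rev G <-> exists d, is_top G (s, d).
  by have := level0_heap_rev s (is_heap_rev G); rewrite heap_revK.
have nonempty : (heap_rev G != fset0) = (G != fset0).
  by rewrite -!cardfs_gt0 card_heap_rev.
split=> [/is_pyramidP [_ G0 G0_uniq]|[nG top0]].
  split=> [|[s d] top_sd]; last by apply: G0_uniq; apply/level0; exists d.
  by rewrite -nonempty; apply/fset0Pn; exists (0%Z, 0%N).
have level0_uniq s : (s, 0%N) \in heap_rev G -> s = 0%Z by case/level0=> d /top0.
apply/is_pyramidP; split=> //; first exact: is_heap_rev.
have [|s sG] := exists_level0 (is_heap_rev G); first by rewrite nonempty.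
by rewrite -(level0_uniq s sG).
Qed.

End HeapsOfPieces.

Definition has_card (K : choiceType) (P : K -> Prop) (k : nat) :=
  exists S : {fset K}, (forall x, x \in S <-> P x) /\ #|` S| = k.

Section Counting.

Variable K : choiceType.

Lemma eq_has_card (P Q : K -> Prop) k :
  (forall x, P x <-> Q x) -> has_card P k -> has_card Q k.
Proof. by move=> PQ [S [SP <-]]; exists S; split=> // x; rewrite SP. Qed.

Lemma has_card0 (P : K -> Prop) : (forall x, ~ P x) -> has_card P 0.
Proof. by move=> nP; exists fset0; split=> // x; rewrite inE; split=> // /nP. Qed.

Lemma has_card1 (x0 : K) : has_card (eq^~ x0) 1.
Proof. by exists [fset x0]; split=> [x|]; rewrite ?cardfs1 // inE; split=> /eqP. Qed.

Lemma has_cardU (P Q : K -> Prop) k1 k2 : (forall x, P x -> ~ Q x) ->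
  has_card P k1 -> has_card Q k2 -> has_card (fun x => P x \/ Q x) (k1 + k2).
Proof.
move=> PnQ [S1 [S1P <-]] [S2 [S2Q <-]]; exists (S1 `|` S2); split=> [x|].
  by rewrite in_fsetU; split=> [/orP [/S1P|/S2Q]|[/S1P|/S2Q] ->]; rewrite ?orbT; auto.
rewrite -cardfsUI; suff -> : S1 `&` S2 = fset0 by rewrite cardfs0 addn0.
by apply/fsetP=> x; rewrite in_fsetI inE; apply/andP=> -[/S1P /PnQ + /S2Q].
Qed.

Lemma has_card_image (K' : choiceType) (P : K -> Prop) (f : K -> K') k :
  (forall x y, P x -> P y -> f x = f y -> x = y) -> has_card P k ->
  has_card (fun y => exists2 x, P x & y = f x) k.
Proof.
move=> f_inj [S [SP <-]]; exists (f @` S); split=> [y|].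
  by split=> [/imfsetP [x /= /SP Px ->]|[x /SP xS ->]]; [exists x | apply/imfsetP; exists x].
by rewrite card_in_imfset // => x y /SP Px /SP Py; apply: f_inj.
Qed.

End Counting.

Lemma bin_succ_mul n m k : (n - m = k * m.+1)%N -> (k * 'C(n, m))%N = 'C(n, m.+1).
Proof.
move=> nm; apply/eqP; rewrite -(eqn_pmul2l (ltn0Sn m)) mul_bin_left nm.
by rewrite mulnA [(m.+1 * k)%N]mulnC.
Qed.

Section TopWindows.

Local Open Scope ring_scope.

Variable a : nat.
Hypothesis a_gt0 : (0 < a)%N.

Definition tops_in (lo hi : int) m (H : {fset int * nat}) :=
  [/\ is_heap a H, #|` H| = m & forall q, is_top a H q -> lo <= q.1 < hi].

Lemma tops_in0 (lo hi : int) H : tops_in lo hi 0 H <-> H = fset0.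
Proof.
split=> [[_ /cardfs0_eq //]|->]; split=> [||q []]; last by rewrite inE.
  by exists [::]; apply/fsetP=> p; rewrite mem_heap_of.
exact: cardfs0.
Qed.

Lemma tops_in_empty (lo : int) m H : ~ tops_in lo lo m.+1 H.
Proof.
case=> hH cH tH; have [|q /tH] := exists_top a_gt0 hH; last by lia.
by rewrite -cardfs_gt0 cH.
Qed.

(* A top of [F] covered by the new piece lies within distance [a] of [hi - 1];
   any other top of [F] stays a top, so it lies in [lo, hi - 1 - a]. *)
Lemma tops_in_add_piece (lo hi : int) m H : lo < hi ->
  (tops_in lo hi m.+1 H /\ exists2 q, is_top a H q & q.1 = hi - 1) <->
  exists2 F, tops_in (Num.min lo (hi - a%:Z)) (hi - 1 + a%:Z) m F &
             H = add_piece a F (hi - 1).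
Proof.
move=> lo_lt_hi; split=> [[[hH cH tH] [q q_top q1]]|[F [hF cF tF] ->]].
  have [F hF EH] := is_top_split a_gt0 hH q_top; rewrite q1 in EH.
  exists F => //; split=> // [|r r_top].
    by apply/eqP; rewrite -eqSS -cH EH card_add_piece.
  case cr: (concurrent a r.1 (hi - 1)); first by move: cr; rewrite /concurrent; case: leP; lia.
  have [rF _] := r_top.
  have /tH : is_top a H r.
    rewrite EH is_top_add_pieceE ?cr //.
    by apply: contraTneq rF => ->; apply: drop_level_notin.
  by move: cr; rewrite /concurrent; case: leP; lia.
split; last by eexists; first exact: is_top_add_piece.
split=> [||[s l]]; [exact: is_heap_add_piece | by rewrite card_add_piece ?cF |].
case: ((s, l) =P (hi - 1, drop_level a F (hi - 1))) => [[-> _] _ /=|/eqP nq]; first lia.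
case/(is_top_add_pieceE nq) => /tF.
by rewrite /concurrent -leNgt /=; case: (leP lo (hi - a%:Z)); lia.
Qed.

Lemma has_card_tops_inS (lo hi : int) m k1 k2 : lo < hi ->
  has_card (tops_in lo (hi - 1) m.+1) k1 ->
  has_card (tops_in (Num.min lo (hi - a%:Z)) (hi - 1 + a%:Z) m) k2 ->
  has_card (tops_in lo hi m.+1) (k1 + k2).
Proof.
move=> lo_lt_hi c1 /(has_card_image (f := add_piece a ^~ (hi - 1))) c2.
apply: eq_has_card (has_cardU _ c1 (c2 _)) => [H|H [_ _ tH]|F F' _ _].
- rewrite -tops_in_add_piece //; split=> [[[hH cH tH]|[]//]|hH].
    by split=> // q /tH; lia.
  have [top_hi|no_top_hi] := classic (exists2 q, is_top a H q & q.1 = hi - 1); first by right.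
  left; case: hH => hH cH tH; split=> // q q_top; have := tH q q_top.
  have : q.1 != hi - 1 by apply/eqP=> q1; apply: no_top_hi; exists q.
  lia.
- by case/tops_in_add_piece=> // _ [q /tH]; lia.
- exact: add_piece_inj.
Qed.

(* For [n <= a] the window [min lo (hi - a), hi - 1 + a) is [hi - a, hi - 1 + a),
   of width [2a - 1] whatever [lo] is. *)
Lemma has_card_tops_in_narrow m c (n : nat) (lo : int) : (n <= a)%N ->
  (forall lo : int, has_card (tops_in lo (lo + (2 * a - 1)%N%:Z) m) c) ->
  has_card (tops_in lo (lo + n%:Z) m.+1) (n * c).
Proof.
elim: n => [_|n IH n_lt_a] c_wide.
  by rewrite addr0; apply: has_card0; apply: tops_in_empty.
rewrite mulSnr; apply: has_card_tops_inS; first by lia.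
  by rewrite (_ : lo + n.+1%:Z - 1 = lo + n%:Z); [exact: IH (ltnW n_lt_a) c_wide | lia].
rewrite min_r; last by lia.
by rewrite (_ : lo + n.+1%:Z - 1 + a%:Z = lo + n.+1%:Z - a%:Z + (2 * a - 1)%N%:Z); last by lia.
Qed.

Lemma has_card_tops_in m (n : nat) (lo : int) : (a - 1 <= n)%N ->
  has_card (tops_in lo (lo + n%:Z) m) 'C(a * m + n - a, m).
Proof.
elim: m n lo => [|m IHm] n lo n_ge.
  by rewrite bin0; apply: eq_has_card (has_card1 fset0) => H; apply: iff_sym (tops_in0 _ _ _).
have base lo' : has_card (tops_in lo' (lo' + (a - 1)%N%:Z) m.+1) 'C(a * m + a - 1, m.+1).
  rewrite -(bin_succ_mul (k := (a - 1)%N)); last by nia.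
  apply: has_card_tops_in_narrow => [|lo'']; first by rewrite leq_subr.
  by rewrite (_ : (a * m + a - 1)%N = (a * m + (2 * a - 1) - a)%N); [apply: IHm | ]; lia.
rewrite -(subnKC n_ge); elim: (n - (a - 1))%N => [|k IHk].
  by rewrite addn0 (_ : (a * m.+1 + (a - 1) - a = a * m + a - 1)%N) ?base //; lia.
rewrite (_ : (a * m.+1 + (a - 1 + k.+1) - a = (a * m + a - 1 + k).+1)%N) ?binS; last by lia.
apply: has_card_tops_inS; first by lia.
  rewrite (_ : _ - 1 = lo + (a - 1 + k)%N%:Z); last by lia.
  by rewrite (_ : (a * m + a - 1 + k = a * m.+1 + (a - 1 + k) - a)%N); [exact: IHk | lia].
rewrite min_l; last by lia.
rewrite (_ : _ - 1 + a%:Z = lo + (a - 1 + k + a)%N%:Z); last by lia.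
by rewrite (_ : (a * m + a - 1 + k = a * m + (a - 1 + k + a) - a)%N); [apply: IHm|]; lia.
Qed.

Lemma has_card_pyramids m :
  has_card (fun H => is_pyramid a H /\ #|` H| = m.+1) 'C(a * m.+1 - 1, m).
Proof.
have tops_at0 : has_card (tops_in 0 1 m.+1) 'C(a * m.+1 - 1, m).
  rewrite -[X in tops_in _ X](add0r 1) -[X in has_card _ X]mul1n.
  apply: has_card_tops_in_narrow => // lo.
  by rewrite (_ : (a * m.+1 - 1 = a * m + (2 * a - 1) - a)%N); [apply: has_card_tops_in | ]; lia.
apply: eq_has_card (has_card_image (f := heap_rev a) _ tops_at0) => [H|G G' [hG _ _] [hG' _ _] E].
  split=> [[G [hG cG tG] ->]|[pH cH]].
    rewrite card_heap_rev // cG; split=> //; apply/is_pyramid_heap_rev => //.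
    by split=> [|q /tG]; [rewrite -cardfs_gt0 cG | lia].
  have hH : is_heap a H by case: pH.
  exists (heap_rev a H); last by rewrite heap_revK.
  move: pH; rewrite -{1}(heap_revK a_gt0 hH).
  case/(is_pyramid_heap_rev a_gt0 (is_heap_rev a H)) => _ top0.
  by split; [exact: is_heap_rev | rewrite card_heap_rev | move=> q /top0 ->].
by rewrite -(heap_revK a_gt0 hG) E heap_revK.
Qed.

End TopWindows.

Unset Implicit Arguments.

Theorem theorem1 (a m : nat) (ha : (2 <= a)%N) (hm : (1 <= m)%N) :
  exists S : {fset {fset (int * nat)}},
    (forall H : {fset (int * nat)}, H \in S <-> (is_pyramid a H /\ #|` H| = m)) /\
    #|` S| = 'C(a * m - 1, m - 1).
Proof.
case: m hm => // m _; rewrite subSS subn0.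
exact: has_card_pyramids (ltnW ha) m.
Qed.
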